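(* Assume that there exists a Banach space $(Z,|||\cdot|||)$ compactly embedded in $Y$, and that all $\Gamma_x(s,t)$ ($x\in X$, $(s,t)\in\Delta_J$) and all $D^\epsilon(x,y)$ ($\epsilon \in (0,1]$, $(x,y) \in X \times X$) are $\mathcal{B}(Z)$-contractions (they map $Z$ into $Z$ with operator norm on $Z$ at most $1$). Then $\{V_\epsilon\}$ satisfies the compact containment criterion in $Z$: for every $f\in Z$, $s\in J$, $\Delta\in(0,1]$ and $T\in J(s)$ there is a compact set $K\subseteq Y$ with $\liminf_{\epsilon\to0}\mathbb P[V_\epsilon(s,t)f\in K\ \forall t\in[s,T]]\ge1-\Delta$.
   Context: $(Y,\|\cdot\|)$ is a real separable Banach space; $J$ is $\mathbb{R}^+$ or $[0,T_\infty]$, $\Delta_J=\{(s,t)\in J^2:s\le t\}$, $J(s)=\{t\in J:t\ge s\}$. An inhomogeneous $Y$-semigroup is a map $\Gamma:\Delta_J\to\mathcal B(Y)$ with $\Gamma(t,t)=I$, $\Gamma(s,r)\Gamma(r,t)=\Gamma(s,t)$ for $s\le r\le t$. Probabilistic setting: $(\Omega,\mathcal F,\mathbb P)$ complete; $X$ finite; $(x_n,T_n)_{n\ge0}$ a Markov renewal process ($x_n\in X$, $T_0=0<T_1<T_2<\dots$) with semi-Markov kernel $Q$; $N(t)=\sup\{n:T_n\le t\}$ (finite everywhere after restricting $\Omega$ to a full-measure event); $x(t)=x_{N(t)}$; $N_s(t)=N(t)-N(s)$, $T_0(s)=s$, $T_n(s)=T_{N(s)+n}$ ($n\ge1$), $x_n(s)=x(T_n(s))$.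 $(\Gamma_x)_{x\in X}$ are inhomogeneous $Y$-semigroups (jointly measurable in their arguments) and $(D^\epsilon(x,y))_{x,y\in X,\epsilon\in(0,1]}$ are operators in $\mathcal B(Y)$ with $(x,y,f)\mapsto D^\epsilon(x,y)f$ measurable. With $t^{\epsilon,s}:=s+\epsilon(t-s)$ and $T^{\epsilon,s}_k(s):=s+\epsilon(T_k(s)-s)$, the rescaled random evolution is defined pathwise for $(s,t)\in\Delta_J$, $\epsilon\in(0,1]$ by $V_\epsilon(s,t)=\Big[\prod_{k=1}^{N_s(t^{1/\epsilon,s})}\Gamma_{x_{k-1}(s)}(T^{\epsilon,s}_{k-1}(s),T^{\epsilon,s}_k(s))D^\epsilon(x_{k-1}(s),x_k(s))\Big]\Gamma_{x(t^{1/\epsilon,s})}\big(T^{\epsilon,s}_{N_s(t^{1/\epsilon,s})}(s),t\big)$ (product ordered left to right, empty product $I$), where $t^{1/\epsilon,s}=s+(t-s)/\epsilon$. *)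

From HB Require Import structures.
From mathcomp Require Import all_boot all_order all_algebra.
From mathcomp Require Import all_classical all_reals all_analysis.
Set Implicit Arguments.
Unset Strict Implicit.
Unset Printing Implicit Defensive.
Import Order.TTheory GRing.Theory Num.Theory.
Import numFieldNormedType.Exports.
Local Open Scope classical_set_scope.
Local Open Scope ring_scope.

Definition bounded_op (R : realType) (Y : normedModType R) (A : Y -> Y) : Prop :=
  linear A /\ continuous A.

Definition borel_sets (T : topologicalType) : set (set T) :=
  <<s [set U : set T | open U] >>.

Definition prod3_sets (R : realType) (Y : normedModType R) : set (set ((R * R) * Y)) :=
  <<s [set C | exists (A1 A2 : set R) (A3 : set Y),
         [/\ borel_sets A1, borel_sets A2, borel_sets A3 & C = (A1 `*` A2) `*` A3]] >>.

Definition jointly_measurable (R : realType) (Y : normedModType R) (J : set R)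
    (G : R -> R -> Y -> Y) : Prop :=
  forall B : set Y, borel_sets B ->
    prod3_sets ([set p | J p.1.1 /\ J p.1.2 /\ p.1.1 <= p.1.2]
                  `&` ((fun p : (R * R) * Y => G p.1.1 p.1.2 p.2) @^-1` B)).

Definition inhom_semigroup (R : realType) (Y : normedModType R) (J : set R)
    (G : R -> R -> Y -> Y) : Prop :=
  [/\ forall s t, J s -> J t -> s <= t -> bounded_op (G s t),
      forall t, J t -> G t t = id
    & forall s r t, J s -> J r -> J t -> s <= r -> r <= t ->
        (G s r \o G r t) = G s t].

Definition compact_embedding (R : realType) (Z Y : normedModType R) (i : Z -> Y) : Prop :=
  [/\ linear i, injective i, continuous i
    & compact (closure (i @` [set z : Z | `|z| <= 1]))].

Definition Z_contraction (R : realType) (Z Y : normedModType R) (i : Z -> Y)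
    (A : Y -> Y) : Prop :=
  forall z : Z, exists z' : Z, A (i z) = i z' /\ `|z'| <= `|z|.

Definition separable (T : topologicalType) : Prop :=
  exists S : set T, countable S /\ dense S.

(* Semi-Markov kernel Q(x, y, t) = P[x_{n+1} = y, T_{n+1} - T_n <= t | x_n = x]. *)
Definition semi_markov_kernel (R : realType) (X : finType) (Q : X -> X -> R -> R) : Prop :=
  [/\ forall x y, {homo Q x y : a b / a <= b},
      forall x y t, t <= 0 -> Q x y t = 0,
      forall x y t, Q x y u @[u --> t^'+] --> Q x y t
    & forall x, (\sum_(y : X) Q x y u) @[u --> +oo] --> (1 : R)].

Definition markov_renewal (d : measure_display) (Omega : measurableType d)
    (R : realType) (P : probability Omega R) (X : finType)
    (x : nat -> Omega -> X) (T : nat -> Omega -> R) (Q : X -> X -> R -> R) : Prop :=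
  [/\ semi_markov_kernel Q,
      forall w, T 0%N w = 0,
      forall n w, T n w < T n.+1 w,
      (forall n (y : X), measurable [set w | x n w = y]) /\
        (forall n, measurable_fun setT (T n))
    & forall n (ys : nat -> X) (ts : nat -> R),
        P [set w | x 0%N w = ys 0%N /\
                   forall k, (0 < k <= n)%N -> x k w = ys k /\ T k w - T k.-1 w <= ts k]
        = (P [set w | x 0%N w = ys 0%N] *
           \prod_(1 <= k < n.+1) (Q (ys k.-1) (ys k) (ts k))%:E)%E].

Section Path.
Variables (R : realType) (X : finType) (xs : nat -> X) (Ts : nat -> R).

(* N(t) = sup {n | T_n <= t}: the unique n with T_n <= t < T_{n+1}. *)
Definition Npath (t : R) : nat := xget 0%N [set n | Ts n <= t < Ts n.+1].
Definition xpath (t : R) : X := xs (Npath t).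
Definition Tk (s : R) (k : nat) : R := if k is 0%N then s else Ts (Npath s + k).
Definition xk (s : R) (k : nat) : X := xpath (Tk s k).
End Path.

Definition resc (R : realType) (eps s u : R) : R := s + eps * (u - s).

(* The rescaled random evolution V_eps(s,t), pathwise, as an operator Y -> Y.
   Products are composed left to right: V = A_1 (A_2 (... (A_n (B y)))). *)
Definition Veps (R : realType) (Y : normedModType R) (X : finType)
    (G : X -> R -> R -> Y -> Y) (D : R -> X -> X -> Y -> Y)
    (xs : nat -> X) (Ts : nat -> R) (eps s t : R) : Y -> Y :=
  let tt := s + (t - s) / eps in
  let n := (Npath Ts tt - Npath Ts s)%N in
  let A k := fun y : Y =>
    G (xk xs Ts s k.-1) (resc eps s (Tk Ts s k.-1)) (resc eps s (Tk Ts s k))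
      (D eps (xk xs Ts s k.-1) (xk xs Ts s k) y) in
  let B := G (xpath xs Ts tt) (resc eps s (Tk Ts s n)) t in
  foldr (fun k (acc : Y -> Y) (y : Y) => A k (acc y)) B (iota 1 n).

From HB Require Import structures.
From mathcomp Require Import all_boot all_order all_algebra.
From mathcomp Require Import all_classical all_reals all_analysis.
Set Implicit Arguments.
Unset Strict Implicit.
Unset Printing Implicit Defensive.
Import Order.TTheory GRing.Theory Num.Theory.
Import numFieldNormedType.Exports.
Local Open Scope classical_set_scope.
Local Open Scope ring_scope.

(* Along every path, V_eps(s,t) is a finite composition of operators G_x(a,b)
   and D^eps(x,y) whose time arguments are rescaled jump times lying in [s,t];
   each of them is a Z-contraction, hence so is V_eps(s,t).  Therefore
   V_eps(s,t) f always lies in K = |||f||| * closure(i(unit ball of Z)), which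
   is compact since the embedding is compact.  The event in the criterion is
   then the sure event, for every eps. *)

Section ZContraction.
Variables (R : realType) (Z Y : normedModType R) (i : Z -> Y).

Lemma Z_contraction_comp (A B : Y -> Y) :
  Z_contraction i A -> Z_contraction i B -> Z_contraction i (fun y => A (B y)).
Proof.
move=> hA hB z; have [z1 [-> n1]] := hB z; have [z2 [-> n2]] := hA z1.
by exists z2; split => //; apply: le_trans n2 n1.
Qed.

Lemma Z_contraction_foldr (A : nat -> Y -> Y) (B : Y -> Y) (l : seq nat) :
  (forall k, k \in l -> Z_contraction i (A k)) -> Z_contraction i B ->
  Z_contraction i (foldr (fun k (acc : Y -> Y) (y : Y) => A k (acc y)) B l).
Proof.
elim: l => [//|k l IH] hl hB /=.
apply: Z_contraction_comp; first by apply: hl; rewrite mem_head.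
by apply: IH => // k' hk'; apply: hl; rewrite in_cons hk' orbT.
Qed.

End ZContraction.

Section JumpTimes.
Variables (R : realType) (Ts : nat -> R).
Hypotheses (Ts_incr : forall n, Ts n < Ts n.+1) (Ts0 : Ts 0%N = 0)
  (Ts_unbounded : forall u, exists n, u < Ts n).

Lemma jump_times_le : {homo Ts : m n / (m <= n)%N >-> m <= n}.
Proof. by apply: homo_leq => [//|y x z|n]; [exact: le_trans | exact: ltW]. Qed.

Lemma Npath_bracket u : 0 <= u -> Ts (Npath Ts u) <= u < Ts (Npath Ts u).+1.
Proof.
move=> u0; apply: (xgetPex 0%N (P := [set n | Ts n <= u < Ts n.+1])).
have exb : exists n, `[< u < Ts n >] by have [n h] := Ts_unbounded u; exists n; apply/asboolP.
case: (ex_minnP exb) => m /asboolP um minm.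
have m0 : (0 < m)%N by rewrite lt0n; apply: contraTneq um => ->; rewrite Ts0 -leNgt.
exists m.-1; rewrite /= prednK // um andbT leNgt.
by apply/negP => /asboolP /minm; rewrite -ltnS prednK // ltnn.
Qed.

Lemma Npath_le s u : 0 <= s -> s <= u -> (Npath Ts s <= Npath Ts u)%N.
Proof.
move=> s0 su; have /andP[hs _] := Npath_bracket s0.
have /andP[_ hu] := Npath_bracket (le_trans s0 su).
rewrite -ltnS ltnNge; apply: contraTN hu => /jump_times_le h.
by rewrite -leNgt (le_trans h) // (le_trans hs su).
Qed.

Lemma Tk_gt s k : 0 <= s -> (0 < k)%N -> s < Tk Ts s k.
Proof.
move=> s0; case: k => [//|k] _ /=; have /andP[_ hs] := Npath_bracket s0.
by apply: lt_le_trans hs _; apply: jump_times_le; rewrite addnS ltnS leq_addr.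
Qed.

Lemma Tk_pred_le s k : 0 <= s -> Tk Ts s k.-1 <= Tk Ts s k.
Proof.
move=> s0; case: k => [|[|k]] /=; [exact: lexx | exact/ltW/(Tk_gt (k := 1) s0) |].
by apply: jump_times_le; rewrite leq_add2l.
Qed.

Lemma Tk_le s u k : 0 <= s -> s <= u ->
  (k <= Npath Ts u - Npath Ts s)%N -> Tk Ts s k <= u.
Proof.
move=> s0 su; case: k => [//|k] hk /=.
have /andP[hu _] := Npath_bracket (le_trans s0 su); apply: le_trans hu.
by apply: jump_times_le; rewrite -(subnKC (Npath_le s0 su)) leq_add2l.
Qed.

End JumpTimes.

Lemma resc_le (R : realType) (eps s a b : R) :
  0 <= eps -> a <= b -> resc eps s a <= resc eps s b.
Proof. by move=> e0 ab; rewrite lerD2l ler_wpM2l // lerB. Qed.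

Lemma resc_itv (R : realType) (eps s t a : R) :
  0 < eps -> s <= a <= s + (t - s) / eps -> s <= resc eps s a <= t.
Proof.
move=> e0 /andP[sa au]; rewrite /resc lerDl (mulr_ge0 (ltW e0)) ?subr_ge0 //=.
have as_le : a - s <= (t - s) / eps by rewrite lerBlDl.
rewrite -lerBrDl; apply: le_trans (ler_wpM2l (ltW e0) as_le) _.
by rewrite mulrC divfK ?gt_eqF.
Qed.

Lemma Veps_Z_contraction (R : realType) (Z Y : normedModType R) (i : Z -> Y)
  (X : finType) (G : X -> R -> R -> Y -> Y) (D : R -> X -> X -> Y -> Y)
  (xs : nat -> X) (Ts : nat -> R) (eps s t : R) :
  (forall n, Ts n < Ts n.+1) -> Ts 0%N = 0 -> (forall u, exists n, u < Ts n) ->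
  0 <= s -> s <= t -> 0 < eps ->
  (forall y a b, s <= a -> a <= b -> b <= t -> Z_contraction i (G y a b)) ->
  (forall y1 y2, Z_contraction i (D eps y1 y2)) ->
  Z_contraction i (Veps G D xs Ts eps s t).
Proof.
move=> inc T0 ex s0 st e0 hG hD; rewrite /Veps.
set u := s + (t - s) / eps; set n := (Npath Ts u - Npath Ts s)%N.
have su : s <= u by rewrite /u lerDl divr_ge0 // ?subr_ge0 // ltW.
have Tk_itv k : (k <= n)%N -> s <= Tk Ts s k <= u.
  move=> hk; rewrite (Tk_le inc T0 ex s0 su hk) andbT.
  by case: k hk => [|k] _; [exact: lexx | exact: ltW (Tk_gt inc T0 ex s0 (ltn0Sn k))].
have resc_Tk_itv k : (k <= n)%N -> s <= resc eps s (Tk Ts s k) <= t.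
  by move=> hk; apply: resc_itv => //; apply: Tk_itv.
apply: (Z_contraction_foldr (A := fun k y =>
    G (xk xs Ts s k.-1) (resc eps s (Tk Ts s k.-1)) (resc eps s (Tk Ts s k))
      (D eps (xk xs Ts s k.-1) (xk xs Ts s k) y))) => [k|].
  rewrite mem_iota add1n ltnS => /andP[k1 kn].
  have /andP[hk1 _] := resc_Tk_itv _ (leq_trans (leq_pred k) kn).
  have /andP[_ hk2] := resc_Tk_itv _ kn.
  apply: Z_contraction_comp (hD _ _).
  by apply: hG hk1 _ hk2; apply: resc_le (ltW e0) (Tk_pred_le inc T0 ex k s0).
have /andP[hn1 hn2] := resc_Tk_itv _ (leqnn n).
exact: hG hn1 hn2 (lexx t).
Qed.

Definition scaled_unit_ball_image (R : realType) (Z Y : normedModType R)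
    (i : Z -> Y) (r : R) : set Y :=
  (fun y => r *: y) @` closure (i @` [set z | `|z| <= 1]).

Lemma compact_scaled_unit_ball_image (R : realType) (Z Y : normedModType R)
    (i : Z -> Y) (r : R) :
  compact_embedding i -> compact (scaled_unit_ball_image i r).
Proof.
case=> _ _ _ hK; apply: continuous_compact => //.
by apply: continuous_subspaceT; exact: scaler_continuous.
Qed.

Lemma scaled_unit_ball_image_mem (R : realType) (Z Y : normedModType R)
    (i : Z -> Y) (r : R) (z : Z) :
  linear i -> `|z| <= r -> scaled_unit_ball_image i r (i z).
Proof.
move=> hl zr.
have i0 : i 0 = 0 by have := hl (-1) 0 0; rewrite scaler0 addr0 scaleN1r addNr.
have iZ a v : i (a *: v) = a *: i v by have := hl a v 0; rewrite !addr0 i0 addr0.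
have [r0|r_neq0] := eqVneq r 0.
  move: zr; rewrite r0 normr_le0 => /eqP ->; exists (i 0); last by rewrite scale0r i0.
  by apply: subset_closure; exists 0 => //=; rewrite normr0.
have r_gt0 : 0 < r by rewrite lt_neqAle eq_sym r_neq0 (le_trans (normr_ge0 z)).
exists (i (r^-1 *: z)); last by rewrite iZ scalerA mulfV // scale1r.
apply: subset_closure; exists (r^-1 *: z) => //=.
by rewrite normrZ normfV gtr0_norm // ler_pdivrMl // mulr1.
Qed.

Lemma limf_einf_at_right0_ge (R : realType) (F : R -> \bar R) (c : \bar R) :
  (forall e, 0 < e <= 1 -> (c <= F e)%E) -> (c <= limf_einf F 0^'+)%E.
Proof.
move=> Fc; rewrite limf_einfE; apply: le_ereal_sup_tmp.
exists (ereal_inf (F @` [set e | 0 < e <= 1])).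
  exists [set e | 0 < e <= 1] => //.
  near=> e; apply/andP; split; near: e; [exact: nbhs_right_gt | exact: nbhs_right_le].
by apply: le_ereal_inf_tmp => _ [e he <-]; exact: Fc.
Unshelve. all: end_near.
Qed.

Theorem proposition4p8
  (R : realType) (Y Z : completeNormedModType R) (i : Z -> Y)
  (J : set R)
  (d : measure_display) (Omega : measurableType d) (P : probability Omega R)
  (X : finType) (x : nat -> Omega -> X) (T : nat -> Omega -> R)
  (Q : X -> X -> R -> R)
  (G : X -> R -> R -> Y -> Y) (D : R -> X -> X -> Y -> Y) :
  (* standing assumptions *)
  separable Y ->
  (J = [set t | 0 <= t] \/ exists Tinf : R, 0 < Tinf /\ J = [set t | 0 <= t <= Tinf]) ->
  measure_is_complete P ->
  markov_renewal P x T Q ->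
  (forall w (t : R), exists n, t < T n w) ->
  (forall y, inhom_semigroup J (G y) /\ jointly_measurable J (G y)) ->
  (forall eps y1 y2, 0 < eps <= 1 -> bounded_op (D eps y1 y2)) ->
  (* assumptions of the proposition *)
  compact_embedding i ->
  (forall y s t, J s -> J t -> s <= t -> Z_contraction i (G y s t)) ->
  (forall eps y1 y2, 0 < eps <= 1 -> Z_contraction i (D eps y1 y2)) ->
  (* compact containment criterion in Z *)
  forall (f : Z) (s : R) (Delta : R) (Tend : R),
    J s -> 0 < Delta <= 1 -> J Tend -> s <= Tend ->
    exists K : set Y, compact K /\
      (limf_einf
         (fun eps : R =>
            P [set w | forall t : R, (s <= t <= Tend)%R ->
                  K (Veps G D (x ^~ w) (T ^~ w) eps s t (i f))])
         (0 : R)^'+ >= ((1 - Delta)%R)%:E)%E.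
Proof.
move=> _ hJ _ [_ T0 inc _ _] ex _ _ hi hG hD f s Delta Tend Js /andP[D0 _] JT sT.
have [s0 J_window] : 0 <= s /\ forall v, s <= v <= Tend -> J v.
  case: hJ Js JT => [-> | [Tinf [_ ->]]] /=; first by move=> s0 _; split=> // v /andP[/(le_trans s0)].
  move=> /andP[s0 _] /andP[_ TT]; split=> // v /andP[h1 h2].
  by rewrite (le_trans s0 h1) (le_trans h2 TT).
exists (scaled_unit_ball_image i `|f|); split; first exact: compact_scaled_unit_ball_image.
apply: limf_einf_at_right0_ge => e he.
suff -> : [set w | forall t, s <= t <= Tend ->
    scaled_unit_ball_image i `|f| (Veps G D (x ^~ w) (T ^~ w) e s t (i f))] = setT.
  by rewrite probability_setT lee_fin gerBl ltW.
apply/seteqP; split => // w _ t /andP[st tT].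
have hV : Z_contraction i (Veps G D (x ^~ w) (T ^~ w) e s t).
  apply: Veps_Z_contraction => //; first by case/andP: he.
  - move=> y a b sa ab bt; have bT := le_trans bt tT.
    by apply: hG => //; apply: J_window; rewrite ?sa ?bT ?(le_trans sa ab) ?(le_trans ab bT).
  - by move=> y1 y2; exact: hD.
have [z [-> zf]] := hV f.
by case: hi => hl _ _ _; exact: scaled_unit_ball_image_mem.
Qed.
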